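(* Let $G$ be a DCG that contains $k$ pairwise vertex-disjoint cycles, each of length at least $3$. Then $|\mathrm{MEC}(G)|\ge 2^k$.
   Context: A DCG is a directed graph without self-loops (cycles allowed). A cycle of length $\ell$ is a sequence of distinct vertices $(v_1,\dots,v_\ell)$ with edges $v_i\to v_{i+1}$ for $i<\ell$ and $v_\ell\to v_1$. Markov equivalence: a path between $a\ne b$ is a sequence of vertices (repeats allowed) with a specified directed edge (either direction) between consecutive vertices; an internal vertex is a collider if both adjacent path-edges point into it; the path is active given $Z$ if every internal non-collider is outside $Z$ and every collider is in $Z$ or has a descendant (itself or a vertex reachable by a directed path) in $Z$; $a,b$ are d-separated given $Z$ if no active path exists; two graphs are Markov equivalent if they have the same d-separations. $\mathrm{MEC}(G)$ is the set of DCGs on the same vertex set Markov equivalent to $G$. *)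

From mathcomp Require Import all_boot.
From mathcomp Require Import boolp.

Set Implicit Arguments.
Unset Strict Implicit.
Unset Printing Implicit Defensive.

(* A directed graph on the finite vertex type T is given by its edge set
   E : {set T * T}; (x, y) \in E means the edge x -> y. *)
Definition is_DCG (T : finType) (E : {set T * T}) : Prop :=
  forall x : T, (x, x) \notin E.

Definition edge_rel (T : finType) (E : {set T * T}) : rel T :=
  fun x y => (x, y) \in E.

Definition is_cycle (T : finType) (E : {set T * T}) (c : seq T) : Prop :=
  c != [::] /\ uniq c /\ cycle (edge_rel E) c.

(* A path starting at vertex a is encoded by the list of its steps:
   (v, d) means the next vertex is v, reached through the edge
   prev -> v if d = true, or through the edge v -> prev if d = false.
   Vertices may repeat. *)
Fixpoint walk_ok (T : finType) (E : {set T * T}) (u : T) (s : seq (T * bool))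
  : bool :=
  match s with
  | [::] => true
  | (v, d) :: s' => (if d then (u, v) \in E else (v, u) \in E) && walk_ok E v s'
  end.

(* Internal vertices of the path are the vertices of all steps but the last.
   An internal vertex v (entered by a step with direction din, left by a step
   with direction dout) is a collider iff din = true (prev -> v) and
   dout = false (next -> v). *)
Fixpoint active_internal (T : finType) (E : {set T * T}) (Z : {set T})
  (s : seq (T * bool)) : bool :=
  match s with
  | (v, din) :: ((_, dout) :: _) as s' =>
      (if din && ~~ dout
       then [exists w in Z, connect (edge_rel E) v w]
       else v \notin Z)
      && active_internal E Z s'
  | _ => true
  end.

Definition active_path (T : finType) (E : {set T * T}) (Z : {set T})
  (a b : T) (s : seq (T * bool)) : bool :=
  [&& walk_ok E a s, last a (map fst s) == b & active_internal E Z s].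

Definition d_separated (T : finType) (E : {set T * T}) (a b : T) (Z : {set T})
  : Prop :=
  ~ exists s : seq (T * bool), active_path E Z a b s.

Definition markov_equivalent (T : finType) (E1 E2 : {set T * T}) : Prop :=
  forall (a b : T) (Z : {set T}), a != b ->
    (d_separated E1 a b Z <-> d_separated E2 a b Z).

Definition MEC (T : finType) (E : {set T * T}) : {set {set T * T}} :=
  [set E' : {set T * T} | `[< is_DCG E' /\ markov_equivalent E E' >]].

From mathcomp Require Import all_boot.
From mathcomp Require Import boolp.

(* Fix a cycle of length at least 3.  Reversing it, while handing every
   vertex of the cycle the other parents of its successor, preserves the
   ancestral relation and the moral graph of every ancestral set; if this
   leaves the graph unchanged, deleting one cycle edge does so instead.  By the
   moralization criterion (a and b are d-connected given Z iff b is reached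
   from a in the moral graph of An({a, b} u Z) through vertices outside Z), such
   a flip is a Markov equivalence.  A flip only changes the edges into its own
   cycle, so flipping the various subsets of k disjoint cycles gives 2^k
   distinct members of MEC(G). *)

Set Implicit Arguments.
Unset Strict Implicit.
Unset Printing Implicit Defensive.

Section DConnection.
Variables (T : finType) (E : {set T * T}) (Z : {set T}) (a : T).

Definition edge_step (u v : T) (d : bool) : bool :=
  if d then (u, v) \in E else (v, u) \in E.

Definition has_desc_in (v : T) : bool :=
  [exists w in Z, connect (edge_rel E) v w].

Definition transmits (u : T) (din dout : bool) : bool :=
  if din && ~~ dout then has_desc_in u else u \notin Z.

(* [dreach v d]: some active path from [a] ends at [v], its last edge
   pointing into [v] iff [d]. *)
Inductive dreach : T -> bool -> Prop :=
| dreach_start v d : edge_step a v d -> dreach v d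
| dreach_step u h v d : dreach u h -> edge_step u v d -> transmits u h d ->
    dreach v d.

Lemma dreach_child u h v :
  dreach u h -> (u, v) \in E -> transmits u h true -> dreach v true.
Proof. by move=> Ru uv; apply: dreach_step Ru _. Qed.

Lemma dreach_parent u h v :
  dreach u h -> (v, u) \in E -> transmits u h false -> dreach v false.
Proof. by move=> Ru vu; apply: dreach_step Ru _. Qed.

Lemma walk_ok_rcons u s v d :
  walk_ok E u (rcons s (v, d)) =
  walk_ok E u s && edge_step (last u (map fst s)) v d.
Proof.
elim: s u => [|[w e] s IH] u /=; first by rewrite andbT.
by rewrite IH andbA.
Qed.

Lemma active_internal_cons z t : active_internal E Z (z :: t) =
  (if t is w :: _ then transmits z.1 z.2 w.2 else true) &&
  active_internal E Z t.
Proof. by case: z => v d; case: t => // [[w e] t]. Qed.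

Lemma active_internal_rcons2 s y x :
  active_internal E Z (rcons (rcons s y) x) =
  active_internal E Z (rcons s y) && transmits y.1 y.2 x.2.
Proof.
elim: s => [|z s IH]; first by case: y => v d; case: x => w e /=; rewrite andbT.
rewrite !rcons_cons !active_internal_cons IH andbA.
by case: s {IH} => //= [|w s]; rewrite ?andbT.
Qed.

Lemma active_path_of_dreach v d : dreach v d ->
  exists s, active_path E Z a v (rcons s (v, d)).
Proof.
elim=> [w e st|u h w e _ [s /and3P[Hw Hl Ha]] st tr].
  by exists [::]; rewrite /active_path /= eqxx !andbT.
rewrite map_rcons last_rcons in Hl; move/eqP: Hl => Hl.
exists (rcons s (u, h)); rewrite /active_path walk_ok_rcons Hw /=.
by rewrite !map_rcons !last_rcons Hl st eqxx active_internal_rcons2 Ha tr.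
Qed.

Lemma dreach_of_active_walk s x : walk_ok E a (rcons s x) ->
  active_internal E Z (rcons s x) -> dreach x.1 x.2.
Proof.
elim/last_ind: s x => [|s y IH] [w e].
  by rewrite /= andbT => st _; apply: dreach_start.
rewrite walk_ok_rcons active_internal_rcons2 => /andP[Hw st] /andP[Ha tr].
rewrite map_rcons last_rcons in st.
by case: y {Hw Ha} (IH y Hw Ha) st tr => u h Hr st tr; apply: dreach_step Hr st tr.
Qed.

Lemma dconnectedP b : a != b ->
  (exists s, active_path E Z a b s) <-> exists d, dreach b d.
Proof.
move=> nab; split=> [[s]|[d /active_path_of_dreach [s Hs]]]; last first.
  by exists (rcons s (b, d)).
case/lastP: s => [|s x] /and3P[Hw Hl Ha].
  by move: nab; rewrite -(eqP Hl) eqxx.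
rewrite map_rcons last_rcons in Hl.
by exists x.2; rewrite -(eqP Hl); apply: dreach_of_active_walk Hw Ha.
Qed.

End DConnection.

Section Moralization.
Variables (T : finType) (E : {set T * T}) (Z : {set T}) (a : T).

Definition anc (P : T -> Prop) (v : T) : Prop :=
  exists w, P w /\ connect (edge_rel E) v w.

(* Moral adjacency inside [S], counting every vertex as its own child so
   that edges and married parents are covered alike. *)
Definition moral_adj (S : T -> Prop) (x y : T) : Prop :=
  exists c, S c /\ (x = c \/ (x, c) \in E) /\ (y = c \/ (y, c) \in E).

Inductive moral_path (S : T -> Prop) : T -> Prop :=
| moral_path0 : moral_path S a
| moral_pathS x y : moral_path S x -> (x = a \/ x \notin Z) ->
    moral_adj S x y -> moral_path S y.

Lemma moral_path_mono S S' :
  (forall v, S v -> S' v) -> forall y, moral_path S y -> moral_path S' y.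
Proof.
move=> SS' y; elim=> [|x z _ IH xZ [c [Sc hxz]]]; first exact: moral_path0.
by apply: moral_pathS IH xZ _; exists c; split; first exact: SS'.
Qed.

Definition anc_aZ : T -> Prop := anc (fun w => w = a \/ w \in Z).
Definition anc_avZ (v : T) : T -> Prop := anc (fun w => w = a \/ w = v \/ w \in Z).

Lemma anc_avZ_of_aZ v x : anc_aZ x -> anc_avZ v x.
Proof.
by case=> w [hw c]; exists w; split=> //; case: hw => [->|?]; [left|right; right].
Qed.

Lemma anc_avZ_connect u v x :
  connect (edge_rel E) u v -> anc_avZ u x -> anc_avZ v x.
Proof.
move=> cuv [w [[->|[->|wZ]] c]].
- by exists a; split=> //; left.
- by exists v; split; [right; left|apply: connect_trans cuv].
- by exists w; split=> //; right; right.
Qed.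

Lemma anc_aZ_of_avZ u x : anc_aZ u -> anc_avZ u x -> anc_aZ x.
Proof.
move=> [w0 [hw0 c0]] [w [[->|[->|wZ]] c]].
- by exists a; split=> //; left.
- by exists w0; split=> //; apply: connect_trans c0.
- by exists w; split=> //; right.
Qed.

Lemma anc_avZ_refl v : anc_avZ v v.
Proof. by exists v; split; [right; left|apply: connect0]. Qed.

Lemma anc_aZ_of_desc u : has_desc_in E Z u -> anc_aZ u.
Proof. by case/existsP=> w /andP[wZ c]; exists w; split=> //; right. Qed.

Lemma anc_aZ_parent u v : (u, v) \in E -> anc_aZ v -> anc_aZ u.
Proof.
by move=> uv [w [hw c]]; exists w; split=> //; apply: connect_trans c; apply: connect1.
Qed.

(* Induction invariant: a vertex entered along an edge has a parent reached by
   a moral path; a vertex left against an edge is reached itself, even inside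
   the smaller ancestral set [anc_aZ]. *)
Lemma dreach_moral_path_spec v h : dreach E Z a v h ->
  if h then exists p, (p, v) \in E /\ (p = a \/ p \notin Z) /\ moral_path (anc_avZ v) p
  else anc_aZ v /\ moral_path anc_aZ v.
Proof.
elim=> [w [] st|u h' w [] _ IH st tr].
- by exists a; do !split=> //; [left|apply: moral_path0].
- split; first by apply: anc_aZ_parent st _; exists a; split; [left|apply: connect0].
  apply: moral_pathS (moral_path0 _) (or_introl erefl) _.
  by exists a; do !split; [exists a; split; [left|apply: connect0]|left|right].
- rewrite /transmits /= andbF in tr.
  exists u; do !split=> //; first by right.
  case: h' IH {tr} => [[p [pu [pZ Hp]]]|[_ Hu]]; last first.
    by apply: moral_path_mono Hu => x; apply: anc_avZ_of_aZ.
  apply: moral_pathS (moral_path_mono _ Hp) pZ _.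
    by move=> x; apply: anc_avZ_connect; apply: connect1.
  by exists u; do !split; [exists w; split; [right; left|exact: connect1]|right|left].
- rewrite /transmits /= andbT in tr.
  case: h' IH tr => [[p [pu [pZ Hp]]] tr|[Su Hu] tr].
    have Su := anc_aZ_of_desc tr.
    split; first exact: anc_aZ_parent st Su.
    apply: moral_pathS (moral_path_mono (fun x => @anc_aZ_of_avZ u x Su) Hp) pZ _.
    by exists u; do !split=> //; right.
  split; first exact: anc_aZ_parent st Su.
  by apply: moral_pathS Hu (or_intror tr) _; exists u; do !split=> //; [left|right].
Qed.

Lemma moral_path_of_dreach b h : dreach E Z a b h -> moral_path (anc_avZ b) b.
Proof.
move/dreach_moral_path_spec; case: h => [[p [pb [pZ Hp]]]|[_ Hb]].
  by apply: moral_pathS Hp pZ _; exists b; do !split; [apply: anc_avZ_refl|right|left].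
by apply: moral_path_mono Hb => x; apply: anc_avZ_of_aZ.
Qed.

Variable b : T.

Let dreach_b := exists d, dreach E Z a b d.

(* Active paths from [a] extend from an open vertex along any edge. *)
Definition open_vertex (x : T) : Prop :=
  x = a \/ x \notin Z /\
  (dreach E Z a x false \/ dreach E Z a x true /\ has_desc_in E Z x).

Lemma dreach_child_of_open x c :
  open_vertex x -> (x, c) \in E -> dreach E Z a c true.
Proof.
case=> [->|[xZ [R|[R _]]]] xc; first exact: dreach_start.
- by apply: dreach_child R xc _; rewrite /transmits.
- by apply: dreach_child R xc _; rewrite /transmits.
Qed.

Lemma dreach_parent_of_open x q :
  open_vertex x -> (q, x) \in E -> dreach E Z a q false.
Proof.
case=> [->|[xZ [R|[R Dx]]]] qx; first exact: dreach_start.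
- by apply: dreach_parent R qx _; rewrite /transmits.
- by apply: dreach_parent R qx _; rewrite /transmits.
Qed.

Lemma notin_of_no_desc y : ~~ has_desc_in E Z y -> y \notin Z.
Proof. by apply: contra => yZ; apply/existsP; exists y; rewrite yZ connect0. Qed.

Lemma has_desc_in_connect y z :
  connect (edge_rel E) y z -> has_desc_in E Z z -> has_desc_in E Z y.
Proof.
move=> cyz /existsP[w /andP[wZ c]]; apply/existsP; exists w.
by rewrite wZ (connect_trans cyz c).
Qed.

Lemma dreach_down y w : dreach E Z a y true -> ~~ has_desc_in E Z y ->
  connect (edge_rel E) y w -> y = w \/ dreach E Z a w true.
Proof.
move=> Ry Dy /connectP[p + ->]; elim: p y Ry Dy => [|z p IH] y Ry Dy /=.
  by left.
case/andP=> yz pz; right.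
have Dz : ~~ has_desc_in E Z z.
  by apply: contra Dy; apply: has_desc_in_connect; apply: connect1.
have Rz : dreach E Z a z true.
  by apply: dreach_child Ry yz _; rewrite /transmits notin_of_no_desc.
by case: (IH z Rz Dz pz) => [<-|].
Qed.

Lemma dreach_up y : ~~ has_desc_in E Z y -> connect (edge_rel E) y a ->
  y = a \/ dreach E Z a y false.
Proof.
move=> Dy /connectP[p + ->]; elim: p y Dy => [|z p IH] y Dy /=; first by left.
case/andP=> yz pz; right.
have Dz : ~~ has_desc_in E Z z.
  by apply: contra Dy; apply: has_desc_in_connect; apply: connect1.
case: (IH z Dz pz) => [za|Rz]; first by apply: dreach_start; rewrite /edge_step -za.
by apply: dreach_parent Rz yz _; rewrite /transmits /= notin_of_no_desc.
Qed.

(* A vertex of [anc_avZ b] entered by an active path but with no descendant in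
   [Z] lies above [b] (continue down to [b]) or above [a] (go back up). *)
Lemma dreach_detour y : anc_avZ b y -> ~~ has_desc_in E Z y ->
  dreach E Z a y true -> dreach_b \/ y = a \/ dreach E Z a y false.
Proof.
move=> [w [[->|[->|wZ]] cyw]] Dy Ry.
- by right; apply: dreach_up.
- by left; exists true; case: (dreach_down Ry Dy cyw) => [<-|].
- by case/negP: Dy; apply/existsP; exists w; rewrite wZ cyw.
Qed.

Definition moral_invariant (y : T) : Prop :=
  dreach_b \/ y = a \/ dreach E Z a y false \/
  dreach E Z a y true /\ has_desc_in E Z y.

Lemma moral_invariant_adj x y :
  open_vertex x -> moral_adj (anc_avZ b) x y -> moral_invariant y.
Proof.
rewrite /moral_invariant.
move=> ox [c [Sc [[<-|xc] [yc|yc]]]].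
- by rewrite yc; case: ox => [->|[_ [R|R]]]; tauto.
- by right; right; left; apply: dreach_parent_of_open ox yc.
- have Rc := dreach_child_of_open ox xc; rewrite yc.
  case Dc: (has_desc_in E Z c); first by right; right; right.
  by case: (dreach_detour Sc (negbT Dc) Rc); tauto.
- have Rc := dreach_child_of_open ox xc.
  case Dc: (has_desc_in E Z c).
    by right; right; left; apply: dreach_parent Rc yc _; rewrite /transmits.
  case: (dreach_detour Sc (negbT Dc) Rc) => [Hb|[ca|Rc']]; first by left.
    by right; right; left; apply: dreach_start; rewrite /edge_step -ca.
  right; right; left; apply: dreach_parent Rc' yc _.
  by rewrite /transmits /= notin_of_no_desc ?Dc.
Qed.

Lemma moral_invariant_path y : moral_path (anc_avZ b) y -> moral_invariant y.
Proof.
elim=> [|x z _ IH xZ Hxz]; first by right; left.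
case: IH => [Hb|[xa|[R|[R Dx]]]]; first by left.
- by apply: moral_invariant_adj Hxz; left.
- by apply: moral_invariant_adj Hxz; case: xZ => [->|xZ]; [left|right; split; [|left]].
- by apply: moral_invariant_adj Hxz; case: xZ => [->|xZ]; [left|right; split; [|right]].
Qed.

Lemma dreach_of_moral_path : a != b -> moral_path (anc_avZ b) b -> dreach_b.
Proof.
move=> nab /moral_invariant_path [|[ba|[R|[R _]]]] //; last by exists true.
  by rewrite ba eqxx in nab.
by exists false.
Qed.

End Moralization.

Lemma dconnected_moralP (T : finType) (E : {set T * T}) (Z : {set T}) (a b : T) :
  a != b ->
  (exists s, active_path E Z a b s) <-> moral_path E Z a (anc_avZ E Z a b) b.
Proof.
move=> nab; rewrite (dconnectedP _ _ nab); split; last exact: dreach_of_moral_path.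
by case=> d; apply: moral_path_of_dreach.
Qed.

Section MoralCriterion.
Variable T : finType.
Implicit Types (E : {set T * T}) (S : T -> Prop).

Definition ancestral E S := forall x y, connect (edge_rel E) x y -> S y -> S x.

Lemma anc_ancestral E P : ancestral E (anc E P).
Proof.
by move=> x y cxy [w [Pw cyw]]; exists w; split=> //; apply: connect_trans cyw.
Qed.

Lemma moral_path_transfer E1 E2 Z a S y :
  (forall x y, moral_adj E1 S x y -> moral_adj E2 S x y) ->
  moral_path E1 Z a S y -> moral_path E2 Z a S y.
Proof.
move=> H; elim=> [|x z _ IH xZ Hxz]; first exact: moral_path0.
exact: moral_pathS IH xZ (H _ _ Hxz).
Qed.

Section SameMoralGraphs.
Variables E1 E2 : {set T * T}.
Hypothesis same_connect :
  forall x y, connect (edge_rel E1) x y = connect (edge_rel E2) x y.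
Hypothesis same_moral_adj : forall S, ancestral E1 S ->
  forall x y, moral_adj E1 S x y -> moral_adj E2 S x y.

Lemma dconnected_transfer Z a b : a != b ->
  (exists s, active_path E1 Z a b s) -> exists s, active_path E2 Z a b s.
Proof.
move=> nab; rewrite !(dconnected_moralP _ _ nab) => /moral_path_transfer.
move=> /(_ E2 (same_moral_adj (@anc_ancestral E1 _))).
by apply: moral_path_mono => x [w [Pw cw]]; exists w; rewrite -same_connect.
Qed.

End SameMoralGraphs.

Lemma markov_equivalent_of_moral E1 E2 :
  (forall x y, connect (edge_rel E1) x y = connect (edge_rel E2) x y) ->
  (forall S, ancestral E1 S ->
    forall x y, moral_adj E1 S x y <-> moral_adj E2 S x y) ->
  markov_equivalent E1 E2.
Proof.
move=> Hc Hm a b Z nab; split=> sep conn; apply: sep.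
- apply: (dconnected_transfer _ _ nab conn) => [x y|S SA x y]; first by rewrite Hc.
  have SA1 : ancestral E1 S by move=> u v cuv; apply: SA; rewrite -Hc.
  exact: (Hm S SA1 x y).2.
- by apply: (dconnected_transfer Hc _ nab conn) => S SA x y; apply: (Hm S SA x y).1.
Qed.

Lemma markov_equivalent_trans E1 E2 E3 :
  markov_equivalent E1 E2 -> markov_equivalent E2 E3 -> markov_equivalent E1 E3.
Proof.
by move=> H12 H23 a b Z nab; apply: iff_trans (H12 a b Z nab) (H23 a b Z nab).
Qed.

End MoralCriterion.

Definition reverse_cycle (T : finType) (c : seq T) (F : {set T * T}) :
    {set T * T} :=
  [set e : T * T | if e.2 \in c
                   then (e.1 == next c e.2) || (e.1 != e.2) && ((e.1, next c e.2) \in F)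
                   else e \in F].

Section ReverseCycle.
Variables (T : finType) (F : {set T * T}) (c : seq T).
Hypotheses (F_DCG : is_DCG F) (c_uniq : uniq c) (c_cycle : cycle (edge_rel F) c).

Lemma reverse_cycle_in x y : ((x, y) \in reverse_cycle c F) =
  if y \in c then (x == next c y) || (x != y) && ((x, next c y) \in F)
  else (x, y) \in F.
Proof. by rewrite inE. Qed.

Lemma next_edge x : x \in c -> (x, next c x) \in F.
Proof. exact: next_cycle c_cycle. Qed.

Lemma next_neq x : x \in c -> next c x != x.
Proof.
by move=> xc; apply/eqP => h; have := next_edge xc; rewrite h (negbTE (F_DCG x)).
Qed.

Lemma connect_on_cycle x y : x \in c -> y \in c -> connect (edge_rel F) x y.
Proof. exact: (connect_cycle c_cycle). Qed.

Lemma cycle_reverse_cycle : cycle (edge_rel (reverse_cycle c F)) (rev c).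
Proof.
rewrite rev_cycle; apply: (@sub_in_cycle _ (mem c) (frel (next c))).
- by move=> z w zc _ /eqP <-; rewrite /edge_rel /= reverse_cycle_in zc eqxx.
- exact/allP.
- exact: cycle_next.
Qed.

Lemma connect_on_reverse_cycle x y :
  x \in c -> y \in c -> connect (edge_rel (reverse_cycle c F)) x y.
Proof. by move=> xc yc; apply: (connect_cycle cycle_reverse_cycle); rewrite mem_rev. Qed.

Lemma reverse_cycle_DCG : is_DCG (reverse_cycle c F).
Proof.
move=> x; rewrite reverse_cycle_in; case: ifP => xc; last exact: F_DCG.
by rewrite eq_sym (negbTE (next_neq xc)) eqxx.
Qed.

Lemma connect_reverse_cycle x y :
  connect (edge_rel F) x y = connect (edge_rel (reverse_cycle c F)) x y.
Proof.
apply/idP/idP; apply: connect_sub => u v; rewrite /edge_rel /= => uv.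
- case vc: (v \in c); last by apply: connect1; rewrite /edge_rel /= reverse_cycle_in vc.
  have pc : prev c v \in c by rewrite mem_prev.
  case: (eqVneq u (prev c v)) => [->|ne]; first exact: connect_on_reverse_cycle.
  apply: (@connect_trans _ _ (prev c v)); last exact: connect_on_reverse_cycle.
  by apply: connect1; rewrite /edge_rel /= reverse_cycle_in pc ne next_prev // uv orbT.
- move: uv; rewrite reverse_cycle_in; case vc: (v \in c); last exact: connect1.
  have nc : next c v \in c by rewrite mem_next.
  case/orP=> [/eqP ->|/andP[_ uv]]; first exact: connect_on_cycle.
  by apply: connect_trans (connect1 uv) (connect_on_cycle _ _).
Qed.

(* A common child [c0] on the cycle is traded for [prev c c0], resp. [next c c0];
   both lie in any ancestral set containing [c0]. *)
Lemma moral_adj_reverse_cycle S x y : ancestral F S ->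
  moral_adj F S x y <-> moral_adj (reverse_cycle c F) S x y.
Proof.
move=> SA; split=> [[c0 [Sc0 [hx hy]]]|[c0 [Sc0 [hx hy]]]]; case c0c: (c0 \in c).
- have pc : prev c c0 \in c by rewrite mem_prev.
  have fam z : z = c0 \/ (z, c0) \in F ->
      z = prev c c0 \/ (z, prev c c0) \in reverse_cycle c F.
    case=> [->|zc0]; first by right; rewrite reverse_cycle_in pc next_prev // eqxx.
    case: (eqVneq z (prev c c0)) => [->|ne]; first by left.
    by right; rewrite reverse_cycle_in pc ne next_prev // zc0 orbT.
  exists (prev c c0); split; last by split; apply: fam.
  by apply: SA Sc0; apply: connect_on_cycle.
- by exists c0; rewrite !reverse_cycle_in c0c.
- have nc : next c c0 \in c by rewrite mem_next.
  have fam z : z = c0 \/ (z, c0) \in reverse_cycle c F ->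
      z = next c c0 \/ (z, next c c0) \in F.
    case=> [->|]; first by right; apply: next_edge.
    by rewrite reverse_cycle_in c0c => /orP[/eqP ->|/andP[_ h]]; [left|right].
  exists (next c c0); split; last by split; apply: fam.
  by apply: SA Sc0; apply: connect_on_cycle.
- by rewrite !reverse_cycle_in c0c in hx hy; exists c0.
Qed.

Lemma reverse_cycle_equiv : markov_equivalent F (reverse_cycle c F).
Proof.
apply: markov_equivalent_of_moral; first exact: connect_reverse_cycle.
by move=> S SA x y; apply: moral_adj_reverse_cycle.
Qed.

Section FixedPoint.
Variable v0 : T.
Hypotheses (v0c : v0 \in c) (F_fixed : reverse_cycle c F = F)
  (next2_neq : next c (next c v0) != v0).

Let e0 := (v0, next c v0).

Lemma fixed_rev_edge z : z \in c -> (next c z, z) \in F.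
Proof. by move=> zc; rewrite -F_fixed reverse_cycle_in zc eqxx. Qed.

Lemma fixed_parent p : (p, next c v0) \in F -> p != v0 -> (p, v0) \in F.
Proof. by move=> h ne; rewrite -F_fixed reverse_cycle_in v0c ne h orbT. Qed.

Lemma drop_edge_DCG : is_DCG (F :\ e0).
Proof. by move=> x; rewrite !inE (negbTE (F_DCG x)) andbF. Qed.

(* The reversed cycle survives in [F], avoiding [e0] because [c] has length
   at least 3. *)
Lemma cycle_drop_edge : cycle (edge_rel (F :\ e0)) (rev c).
Proof.
rewrite rev_cycle; apply: (@sub_in_cycle _ (mem c) (frel (next c))).
- move=> z w zc _ /eqP <-; rewrite /edge_rel /= !inE fixed_rev_edge // andbT.
  by apply/eqP; case=> e1 e2; move: next2_neq; rewrite -e2 e1 eqxx.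
- exact/allP.
- exact: cycle_next.
Qed.

Lemma connect_drop_edge x y :
  connect (edge_rel F) x y = connect (edge_rel (F :\ e0)) x y.
Proof.
apply/idP/idP; apply: connect_sub => u v; rewrite /edge_rel /= => uv.
- case: (eqVneq (u, v) e0) => [[-> ->]|ne].
    by apply: (connect_cycle cycle_drop_edge); rewrite mem_rev ?mem_next.
  by apply: connect1; rewrite /edge_rel /= !inE ne.
- by apply: connect1; move: uv; rewrite !inE => /andP[].
Qed.

(* A common child [next c v0] is traded for [v0], which has the same
   parents apart from itself. *)
Lemma moral_adj_drop_edge S x y : ancestral F S ->
  moral_adj F S x y <-> moral_adj (F :\ e0) S x y.
Proof.
move=> SA; split=> [[c0 [Sc0 [hx hy]]]|[c0 [Sc0 [hx hy]]]]; last first.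
  by exists c0; rewrite !inE in hx hy; split=> //; split;
    [case: hx => [|/andP[]]|case: hy => [|/andP[]]]; auto.
have ne0 z : z != v0 -> (z, v0) != e0.
  by move=> zv; apply/eqP; case=> h _; move: zv; rewrite h eqxx.
case: (eqVneq c0 (next c v0)) => [e|ne].
  have nv : next c v0 != v0 := next_neq v0c.
  have fam z : z = c0 \/ (z, c0) \in F -> z = v0 \/ (z, v0) \in F :\ e0.
    rewrite e !inE; case=> [->|zc0].
      by right; rewrite ne0 ?fixed_rev_edge.
    case: (eqVneq z v0) => [->|zv]; first by left.
    by right; rewrite ne0 ?fixed_parent.
  exists v0; split; last by split; apply: fam.
  by apply: SA Sc0; rewrite e; apply: connect1; apply: next_edge.
have fam z : z = c0 \/ (z, c0) \in F -> z = c0 \/ (z, c0) \in F :\ e0.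
  case=> [->|h]; [by left|right; rewrite !inE h andbT].
  by apply/eqP; case=> _ h'; move: ne; rewrite h' eqxx.
by exists c0; split=> //; split; apply: fam.
Qed.

Lemma drop_edge_equiv : markov_equivalent F (F :\ e0).
Proof.
apply: markov_equivalent_of_moral; first exact: connect_drop_edge.
by move=> S SA x y; apply: moral_adj_drop_edge.
Qed.

End FixedPoint.

End ReverseCycle.

Section FlipCycles.
Variable T : finType.
Implicit Types (c : seq T) (F : {set T * T}).

Definition flip_cycle c F : {set T * T} :=
  if c is v0 :: _ then
    if reverse_cycle c F == F then F :\ (v0, next c v0) else reverse_cycle c F
  else F.

Lemma next_next_head_neq (v0 v1 v2 : T) r : uniq [:: v0, v1, v2 & r] ->
  next [:: v0, v1, v2 & r] (next [:: v0, v1, v2 & r] v0) != v0.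
Proof.
rewrite /= !inE => /andP[/norP[n01 /norP[n02 _]] _].
by rewrite /next /= eqxx /= (eq_sym v1 v0) (negbTE n01) eqxx eq_sym.
Qed.

Lemma flip_cycle_equiv c F : is_DCG F -> uniq c -> cycle (edge_rel F) c ->
  3 <= size c -> is_DCG (flip_cycle c F) /\ markov_equivalent F (flip_cycle c F).
Proof.
case: c => [|v0 [|v1 [|v2 r]]] // HF Hu Hc _; rewrite /flip_cycle.
case: ifP => /eqP Hfix.
  split; first exact: drop_edge_DCG.
  by apply: drop_edge_equiv => //; [rewrite inE eqxx|apply: next_next_head_neq].
by split; [apply: reverse_cycle_DCG|apply: reverse_cycle_equiv].
Qed.

Lemma flip_cycle_out c F x y : y \notin c ->
  ((x, y) \in flip_cycle c F) = ((x, y) \in F).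
Proof.
case: c => [|v0 r] // yc; rewrite /flip_cycle; case: ifP => _; last first.
  by rewrite reverse_cycle_in (negbTE yc).
rewrite !inE; case: (eqVneq (x, y) (v0, next (v0 :: r) v0)) => [[_ e]|_] //.
by have := mem_next (v0 :: r) v0; rewrite /= -e (negbTE yc) inE eqxx.
Qed.

Lemma reverse_cycle_fixedE c F : (reverse_cycle c F == F) =
  [forall x, forall y, (y \in c) ==> (((x, y) \in reverse_cycle c F) == ((x, y) \in F))].
Proof.
apply/eqP/forallP => [-> x|H]; first by apply/forallP => y; rewrite eqxx implybT.
apply/setP => [[x y]]; case yc: (y \in c); last by rewrite reverse_cycle_in yc.
by have /forallP/(_ y) := H x; rewrite yc => /eqP.
Qed.

Lemma flip_cycle_local c F1 F2 :
  (forall x y, y \in c -> ((x, y) \in F1) = ((x, y) \in F2)) ->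
  forall x y, y \in c -> ((x, y) \in flip_cycle c F1) = ((x, y) \in flip_cycle c F2).
Proof.
case: c => [|v0 r] // H.
have Hrev x y : y \in v0 :: r ->
    ((x, y) \in reverse_cycle (v0 :: r) F1) = ((x, y) \in reverse_cycle (v0 :: r) F2).
  by move=> yc; rewrite !reverse_cycle_in yc H // mem_next.
have Hfix : (reverse_cycle (v0 :: r) F1 == F1) = (reverse_cycle (v0 :: r) F2 == F2).
  rewrite !reverse_cycle_fixedE; apply: eq_forallb => u; apply: eq_forallb => w.
  by case wc: (w \in v0 :: r) => //=; rewrite Hrev // H.
by move=> x y yc; rewrite /flip_cycle Hfix; case: ifP => _; rewrite ?Hrev // !inE H.
Qed.

Lemma flip_cycle_changes c F : is_DCG F -> uniq c -> cycle (edge_rel F) c ->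
  3 <= size c -> exists x y, y \in c /\ ((x, y) \in flip_cycle c F) != ((x, y) \in F).
Proof.
case: c => [|v0 r] // HF Hu Hc _; rewrite /flip_cycle; case: ifP => [_|].
  exists v0, (next (v0 :: r) v0); rewrite mem_next inE eqxx !inE eqxx.
  by rewrite next_edge // inE eqxx.
rewrite reverse_cycle_fixedE => /negbT; rewrite negb_forall => /existsP[x].
rewrite negb_forall => /existsP[y]; rewrite negb_imply => /andP[yc ne].
by exists x, y.
Qed.

Definition flip_cycles (l : seq (seq T)) F : {set T * T} := foldr flip_cycle F l.

Lemma flip_cycles_out l F x y : (forall c, c \in l -> y \notin c) ->
  ((x, y) \in flip_cycles l F) = ((x, y) \in F).
Proof.
elim: l => [|c l IH] //= yl; rewrite flip_cycle_out ?yl ?mem_head //.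
by apply: IH => c' c'l; apply: yl; rewrite inE c'l orbT.
Qed.

Lemma flip_cycles_in l F c x y :
  pairwise (fun c1 c2 : seq T => [disjoint c1 & c2]) l -> c \in l -> y \in c ->
  ((x, y) \in flip_cycles l F) = ((x, y) \in flip_cycle c F).
Proof.
elim: l => [|c' l IH] //= /andP[c'l l_disj]; rewrite inE.
case: (eqVneq c c') => [-> _ yc|ne /= cl yc].
  apply: flip_cycle_local yc => u w wc; apply: flip_cycles_out => c'' c''l.
  by rewrite (disjointFr (allP c'l c'' c''l) wc).
rewrite flip_cycle_out ?IH //.
by apply/negP => yc'; rewrite (disjointFr (allP c'l c cl) yc') in yc.
Qed.

Lemma flip_cycles_equiv l F : is_DCG F ->
  pairwise (fun c1 c2 : seq T => [disjoint c1 & c2]) l ->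
  (forall c, c \in l -> [/\ uniq c, cycle (edge_rel F) c & 3 <= size c]) ->
  is_DCG (flip_cycles l F) /\ markov_equivalent F (flip_cycles l F).
Proof.
move=> F_DCG; elim: l => [|c l IH] /=; first by [].
case/andP=> cl l_disj Hl.
have [c_uniq c_cycle c_size] := Hl c (mem_head _ _).
have [DCG_l equiv_l] : is_DCG (flip_cycles l F) /\ markov_equivalent F (flip_cycles l F).
  by apply: IH => // c' c'l; apply: Hl; rewrite inE c'l orbT.
have c_cycle_l : cycle (edge_rel (flip_cycles l F)) c.
  rewrite -(@eq_in_cycle _ (mem c) (edge_rel F)) ?allss //.
  move=> u w _ wc /=; rewrite /edge_rel /= flip_cycles_out // => c' c'l.
  by rewrite (disjointFr (allP cl c' c'l) wc).
have [DCG_c equiv_c] := flip_cycle_equiv DCG_l c_uniq c_cycle_l c_size.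
by split=> //; apply: markov_equivalent_trans equiv_c.
Qed.

End FlipCycles.

Section CycleFamily.
Variables (T : finType) (E : {set T * T}) (k : nat) (cs : 'I_k -> seq T).
Implicit Types S : {set 'I_k}.
Hypotheses (E_DCG : is_DCG E)
  (cs_cycle : forall i, is_cycle E (cs i) /\ 3 <= size (cs i))
  (cs_disjoint : forall i j, i != j -> [disjoint cs i & cs j]).

Definition flip_family (S : {set 'I_k}) : {set T * T} :=
  flip_cycles (map cs (enum S)) E.

Lemma flip_family_disjoint S :
  pairwise (fun c1 c2 : seq T => [disjoint c1 & c2]) (map cs (enum S)).
Proof.
rewrite pairwise_map; apply: (@sub_pairwise _ (fun i j => i != j)).
  by move=> i j; apply: cs_disjoint.
by rewrite -uniq_pairwise enum_uniq.
Qed.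

Lemma flip_family_MEC S : flip_family S \in MEC E.
Proof.
rewrite inE; apply/asboolP; apply: flip_cycles_equiv (flip_family_disjoint S) _ => //.
by move=> _ /mapP[i _ ->]; have [[_ [? ?]] ?] := cs_cycle i.
Qed.

Lemma flip_family_inj : injective flip_family.
Proof.
suff flip_neq S1 S2 i : i \in S1 -> i \notin S2 -> flip_family S1 != flip_family S2.
  move=> S1 S2 eqS; apply/setP => i.
  case: (boolP (i \in S1)) => i1; case: (boolP (i \in S2)) => i2 //.
  - by case/eqP: (flip_neq _ _ _ i1 i2).
  - by case/eqP: (flip_neq _ _ _ i2 i1).
move=> i1 i2; have [[_ [ui cyi]] szi] := cs_cycle i.
have [x [y [yc ne]]] := flip_cycle_changes E_DCG ui cyi szi.
have in1 : ((x, y) \in flip_family S1) = ((x, y) \in flip_cycle (cs i) E).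
  by apply: flip_cycles_in (flip_family_disjoint S1) _ yc; rewrite map_f ?mem_enum.
have in2 : ((x, y) \in flip_family S2) = ((x, y) \in E).
  apply: flip_cycles_out => _ /mapP[j jS ->].
  have ij : i != j by apply: contraNneq i2 => ->; rewrite -mem_enum.
  by rewrite (disjointFr (cs_disjoint ij) yc).
by apply: contraNneq ne => eqS; rewrite -in1 -in2 eqS.
Qed.

End CycleFamily.

Theorem mainTheorem13 (T : finType) (E : {set T * T}) (k : nat)
    (cs : 'I_k -> seq T) :
  is_DCG E ->
  (forall i : 'I_k, is_cycle E (cs i) /\ 3 <= size (cs i)) ->
  (forall i j : 'I_k, i != j -> [disjoint cs i & cs j]) ->
  2 ^ k <= #|MEC E|.
Proof.
move=> E_DCG cs_cycle cs_disjoint.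
have <- : #|flip_family E cs @: powerset [set: 'I_k]| = 2 ^ k.
  by rewrite card_imset ?card_powerset ?cardsT ?card_ord //; apply: flip_family_inj.
apply/subset_leq_card/subsetP => _ /imsetP[S _ ->].
exact: flip_family_MEC.
Qed.
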